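(* Let $G=(V,E)$ be a connected graph with positive edge costs $c:E\to\mathbb{R}_+$, let $\alpha\ge 1$, and let $(U,\complement{U})$ be an $\alpha$-approximate minimum cut of $G$. Then there exist subsets $S,T\subseteq V$ with $|S|,|T|\le \lfloor 2\alpha\rfloor+1$ such that $(U,\complement{U})$ is the unique minimum $(S,T)$-terminal cut.
   Context: A cut is a partition of $V$ into two non-empty parts; for $\emptyset\ne U\subsetneq V$ write $\complement{U}=V\setminus U$, $(U,\complement{U})$ for the corresponding cut, $\delta(U)$ for the set of edges with exactly one endpoint in $U$, and $d(U)=\sum_{e\in\delta(U)}c(e)$ for its cut value. Let $\lambda=\min\{d(U):\emptyset\ne U\subsetneq V\}$. For $\alpha\ge1$, the cut $(U,\complement{U})$ is an $\alpha$-approximate minimum cut if $d(U)\le\alpha\lambda$. For disjoint non-empty $S,T\subseteq V$, a cut $(U,\complement{U})$ is an $(S,T)$-terminal cut if $S\subseteq U\subseteq V\setminus T$; a minimum $(S,T)$-terminal cut is an $(S,T)$-terminal cut of minimum cut value $d(U)$. *)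

From HB Require Import structures.
From mathcomp Require Import all_boot all_order all_algebra.
Set Implicit Arguments. Unset Strict Implicit. Unset Printing Implicit Defensive.
Import Order.TTheory GRing.Theory Num.Theory.
Local Open Scope ring_scope.

Section Cuts.
Variables (R : realFieldType) (V : finType).
Variable (E : {set {set V}}).
Variable (c : {set V} -> R).

Definition is_graph : Prop := forall e, e \in E -> #|e| = 2%N.
Definition adj : rel V := fun x y => [set x; y] \in E.
Definition connected_graph : Prop := forall x y : V, connect adj x y.
Definition positive_costs : Prop := forall e, e \in E -> 0 < c e.

Definition is_cut (U : {set V}) : Prop := U != set0 /\ U != setT.
Definition delta (U : {set V}) : {set {set V}} :=
  [set e in E | #|e :&: U| == 1%N].
Definition cutval (U : {set V}) : R := \sum_(e in delta U) c e.

Definition is_min_cut_value (lam : R) : Prop :=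
  (exists W, is_cut W /\ cutval W = lam) /\
  (forall W, is_cut W -> lam <= cutval W).

Definition approx_min_cut (alpha : R) (U : {set V}) : Prop :=
  is_cut U /\ exists lam, is_min_cut_value lam /\ cutval U <= alpha * lam.

Definition terminal_cut (S T U : {set V}) : Prop :=
  [/\ S != set0, T != set0, [disjoint S & T],
      is_cut U & (S \subset U) && (U \subset ~: T)].

Definition unique_min_terminal_cut (S T U : {set V}) : Prop :=
  terminal_cut S T U /\
  forall W, terminal_cut S T W -> W != U -> cutval U < cutval W.
End Cuts.

(* U is the unique minimum of d between S and U when every X with S ⊆ X ⊊ U
   has d(X) > d(U).  Take S ⊆ U minimal under inclusion with this property
   (S = U has it).  Minimality yields, for each u ∈ S, a set W_u with
   S \ u ⊆ W_u ⊆ U \ u and d(W_u) ≤ d(U).  Classify the vertices by their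
   profile {u | x ∈ W_u}: the isolating sets Q_u of vertices with profile S \ u,
   together with the |S| - 2 layers {x | |profile x| > i}, are crossed by each
   edge at most as often as the W_u are, so their cut values sum to at most
   Σ d(W_u) ≤ |S| d(U).  The layers lie between S and U and cost at least d(U)
   each, so Σ d(Q_u) ≤ 2 d(U); as each Q_u is a cut, |S| λ ≤ 2 d(U) ≤ 2αλ.
   Doing the same for the complement of U gives T, and submodularity of d
   shows that U is the unique minimum (S, T)-terminal cut. *)

From HB Require Import structures.
From mathcomp Require Import all_boot all_order all_algebra.
From mathcomp Require Import reals.
From mathcomp Require Import zify lra.
Import Order.TTheory GRing.Theory Num.Theory.
Set Implicit Arguments. Unset Strict Implicit. Unset Printing Implicit Defensive.

Lemma neqb_nat (p q : bool) : ((p != q) + 2 * (p && q) = p + q)%N.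
Proof. by case: p; case: q. Qed.

Lemma sum_ltn_ord (k n : nat) : (\sum_(i < k) (i < n) = minn k n)%N.
Proof. by elim: k => [|k IHk]; rewrite ?big_ord0 ?big_ord_recr /= ?IHk; lia. Qed.

Section FinsetCounting.
Variable T : finType.
Implicit Types S A B X : {set T}.

Lemma sum_mem_card S X : (\sum_(u in S) (u \in X) = #|S :&: X|)%N.
Proof.
rewrite (big_setID X) /= [X in (_ + X)%N]big1 ?addn0 => [|u]; last first.
  by rewrite inE => /andP[/negbTE ->].
by rewrite -sum1_card; apply: eq_bigr => u; rewrite inE => /andP[_ ->].
Qed.

Lemma sum_eq_setD1_le S A : A \subset S ->
  (\sum_(u in S) (A == S :\ u) <= (#|A| == #|S|.-1))%N.
Proof.
move=> AS; case: (boolP (#|A| == #|S|.-1)) => [/eqP cardA | neA].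
  have cardSA : (#|S :&: ~: A| <= 1)%N.
    by move: (cardsID A S); rewrite (setIidPr AS) cardA setDE; lia.
  apply: leq_trans cardSA; rewrite -sum_mem_card leq_sum // => u uS.
  by case: eqP => // ->; rewrite !inE eqxx.
rewrite big1 // => u uS; case: eqP => // defA.
by move: neA; rewrite defA (cardsD1 u S) uS add1n eqxx.
Qed.

(* Edge-wise form of the counting step: A and B are the profiles of the two
   endpoints of an edge. *)
Lemma crossing_profile_le S A B : (1 < #|S|)%N -> A \subset S -> B \subset S ->
  (\sum_(u in S) ((A == S :\ u) != (B == S :\ u))
   + \sum_(i < #|S| - 2) ((i < #|A|) != (i < #|B|))
   <= \sum_(u in S) ((u \in A) != (u \in B)))%N.
Proof.
move=> S2 AS BS; have [<-|neqAB] := eqVneq A B.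
  by rewrite !big1 // => u _; rewrite eqxx.
have isolating : (\sum_(u in S) ((A == S :\ u) != (B == S :\ u))
          <= (#|A| == #|S|.-1) + (#|B| == #|S|.-1))%N.
  apply: leq_trans (leq_add (sum_eq_setD1_le AS) (sum_eq_setD1_le BS)).
  by rewrite -big_split leq_sum // => u _; case: (A == _); case: (B == _).
have layers : (\sum_(i < #|S| - 2) ((i < #|A|) != (i < #|B|))
          + 2 * minn (#|S| - 2) (minn #|A| #|B|)
          = minn (#|S| - 2) #|A| + minn (#|S| - 2) #|B|)%N.
  rewrite -(sum_ltn_ord _ (minn _ _)) -!(sum_ltn_ord (#|S| - 2)).
  rewrite big_distrr -!big_split /=; apply: eq_bigr => i _.
  by rewrite leq_min neqb_nat.
have symdiff : (\sum_(u in S) ((u \in A) != (u \in B)) + 2 * #|S :&: (A :&: B)|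
          = #|S :&: A| + #|S :&: B|)%N.
  rewrite -!sum_mem_card big_distrr -!big_split /=.
  by apply: eq_bigr => u _; rewrite inE neqb_nat.
rewrite (setIidPr AS) (setIidPr BS) (setIidPr (subset_trans (subsetIl A B) AS)) in symdiff.
have lt_inter : (#|A :&: B| < #|A|)%N || (#|A :&: B| < #|B|)%N.
  apply: contraNT neqAB; rewrite negb_or -!leqNgt => /andP [leA leB].
  have /eqP eA : A :&: B == A by rewrite eqEcard subsetIl.
  have /eqP eB : A :&: B == B by rewrite eqEcard subsetIr.
  by apply/eqP; rewrite -eA eB.
have := subset_leq_card AS; have := subset_leq_card BS.
have := subset_leq_card (subsetIl A B); have := subset_leq_card (subsetIr A B).
lia.
Qed.
End FinsetCounting.

Local Open Scope ring_scope.

Definition crosses (T : finType) (e X : {set T}) : bool := #|e :&: X| == 1%N.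

Lemma crosses2 (T : finType) (x y : T) (X : {set T}) :
  x != y -> crosses [set x; y] X = ((x \in X) != (y \in X)).
Proof.
move=> xy; rewrite /crosses -sum_mem_card big_setU1 ?big_set1 ?inE //=.
by case: (x \in X); case: (y \in X).
Qed.

Lemma is_cutC (T : finType) (U : {set T}) : is_cut U -> is_cut (~: U).
Proof.
case=> U0 UT; split; [apply: contraNneq UT | apply: contraNneq U0] => UC.
  by rewrite -[U]setCK UC setC0.
by rewrite -[U]setCK UC setCT.
Qed.

Lemma is_cut_subset (T : finType) (X U : {set T}) (x : T) :
  x \in X -> X \subset U -> U != setT -> is_cut X.
Proof.
move=> xX XU UT; split; first by apply/set0Pn; exists x.
by apply: contraNneq UT => XT; rewrite eqEsubset subsetT -XT.
Qed.

Section CutFunction.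
Variables (R : realFieldType) (V : finType) (E : {set {set V}}) (c : {set V} -> R).
Hypotheses (graphE : is_graph E) (posc : positive_costs E c).
Local Notation d := (cutval E c).
Implicit Types S T U W X : {set V}.

Lemma cutvalE X : d X = \sum_(e in E) c e *+ crosses e X.
Proof.
rewrite /cutval /delta big_set big_mkcondr /=.
by apply: eq_bigr => e _; rewrite /crosses; case: (_ == _).
Qed.

Lemma sum_cutvalE (I : Type) (r : seq I) (P : pred I) (F : I -> {set V}) :
  \sum_(i <- r | P i) d (F i) = \sum_(e in E) c e *+ \sum_(i <- r | P i) crosses e (F i).
Proof.
under eq_bigr do rewrite cutvalE.
by rewrite exchange_big; apply: eq_bigr => e _; rewrite sumrMnr.
Qed.

Lemma ler_sum_edges (f g : {set V} -> nat) : {in E, forall e, f e <= g e}%N ->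
  \sum_(e in E) c e *+ f e <= \sum_(e in E) c e *+ g e.
Proof.
move=> fg; apply: ler_sum => e eE.
by apply: ler_wpMn2l; [exact: ltW (posc eE) | exact: fg].
Qed.

Lemma edgeP e : e \in E -> exists x y, x != y /\ e = [set x; y].
Proof. by move=> eE; apply/cards2P; rewrite graphE. Qed.

Lemma cutval_ge0 X : 0 <= d X.
Proof. by rewrite cutvalE sumr_ge0 // => e eE; rewrite mulrn_wge0 // ltW // posc. Qed.

Lemma cutval0 : d set0 = 0.
Proof. by rewrite cutvalE big1 // => e _; rewrite /crosses setI0 cards0. Qed.

Lemma cutvalC X : d (~: X) = d X.
Proof.
rewrite !cutvalE; apply: eq_bigr => e eE; have [x [y [xy ->]]] := edgeP eE.
by rewrite !crosses2 // !inE; case: (x \in X); case: (y \in X).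
Qed.

Lemma cutval_submod A B : d (A :&: B) + d (A :|: B) <= d A + d B.
Proof.
rewrite !cutvalE -!big_split /=.
under eq_bigr do rewrite -mulrnDr.
under [X in _ <= X]eq_bigr do rewrite -mulrnDr.
apply: ler_sum_edges => e eE; have [x [y [xy ->]]] := edgeP eE.
rewrite !crosses2 // !inE.
by case: (x \in A); case: (x \in B); case: (y \in A); case: (y \in B).
Qed.

Lemma cutval_gt0 X : connected_graph E -> is_cut X -> 0 < d X.
Proof.
move=> conn Xcut; have [/set0Pn [x xX] _] := Xcut.
have [/set0Pn [y yX] _] := is_cutC Xcut; rewrite inE in yX.
have [/existsP [a /existsP [b /and3P [ab aX bX]]] | noedge] :=
  boolP [exists a, exists b, [&& adj E a b, a \in X & b \notin X]].
  have neab : a != b by apply: contraNneq bX => <-.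
  rewrite cutvalE (bigD1 [set a; b]) //= crosses2 // aX bX mulr1n.
  rewrite (lt_le_trans (posc ab)) // lerDl sumr_ge0 // => e /andP [eE _].
  by rewrite mulrn_wge0 // ltW // posc.
have closedX : closed (adj E) X.
  move=> a b ab; apply/idP/idP => [aX | bX]; apply: contraNT noedge => nX.
    by apply/existsP; exists a; apply/existsP; exists b; apply/and3P.
  apply/existsP; exists b; apply/existsP; exists a; apply/and3P; split=> //.
  by move: ab; rewrite /adj setUC.
by move: (closed_connect closedX (conn x y)); rewrite xX (negbTE yX).
Qed.

Definition unique_min_between (S U : {set V}) : bool :=
  [forall X : {set V}, (S \subset X) && (X \proper U) ==> (d U < d X)].

Lemma unique_min_betweenP S U :
  reflect (forall X, S \subset X -> X \proper U -> d U < d X) (unique_min_between S U).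
Proof.
apply: (iffP forallP) => [minU X SX XU | minU X]; first by move: (minU X); rewrite SX XU.
by apply/implyP => /andP [SX XU]; apply: minU.
Qed.

Lemma unique_min_between_lt S U X : unique_min_between S U ->
  S \subset X -> X \subset U -> X != U -> d U < d X.
Proof. by move=> /unique_min_betweenP minU SX XU neXU; rewrite minU // properEneq neXU. Qed.

Lemma unique_min_between_le S U X : unique_min_between S U ->
  S \subset X -> X \subset U -> d U <= d X.
Proof.
move=> minU SX XU; have [-> //|neXU] := eqVneq X U.
by rewrite ltW // (unique_min_between_lt minU).
Qed.

Lemma unique_min_between_neq0 S U : U != set0 -> unique_min_between S U -> S != set0.
Proof.
move=> U0 minU; apply: contraTneq (cutval_ge0 U) => S0; rewrite -ltNge -cutval0.
by apply: (unique_min_between_lt minU); rewrite ?S0 ?sub0set // eq_sym.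
Qed.

Section MinimalityWitnesses.
Variables (U S : {set V}) (W : V -> {set V}).
Hypotheses (S2 : (1 < #|S|)%N) (minU : unique_min_between S U).
Hypothesis W_witness : forall u, u \in S ->
  [/\ W u \subset U, S :\ u \subset W u, u \notin W u & d (W u) <= d U].

Definition profile x := [set u in S | x \in W u].
Definition isolating u := [set x | profile x == S :\ u].
Definition layer i := [set x | i < #|profile x|]%N.

Lemma profile_sub x : profile x \subset S.
Proof. by apply/subsetP => u; rewrite inE => /andP []. Qed.

Lemma profile_out x : x \notin U -> profile x = set0.
Proof.
move=> xU; apply/setP => u; rewrite !inE; case uS: (u \in S) => //=.
by have [WU _ _ _] := W_witness uS; apply: contraNF xU; apply: (subsetP WU).
Qed.

Lemma profile_self s : s \in S -> profile s = S :\ s.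
Proof.
move=> sS; apply/setP => u; rewrite !inE; have [-> | us] := eqVneq u s.
  by have [_ _ sW _] := W_witness sS; rewrite (negbTE sW) andbF.
case uS: (u \in S) => //=; have [_ SuW _ _] := W_witness uS.
by apply: (subsetP SuW); rewrite !inE eq_sym us.
Qed.

Lemma mem_witness u x : u \in S -> (x \in W u) = (u \in profile x).
Proof. by move=> uS; rewrite inE uS. Qed.

Lemma mem_isolating u : u \in S -> u \in isolating u.
Proof. by move=> uS; rewrite inE profile_self. Qed.

Lemma isolating_sub u : isolating u \subset U.
Proof.
apply/subsetP => x; rewrite inE; apply: contraTT => xU; rewrite profile_out //.
by apply/eqP => Su0; move: S2; rewrite (cardsD1 u S) -Su0 cards0 addn0; case: (u \in S).
Qed.

Lemma layer_between i : (i < #|S| - 2)%N -> S \subset layer i /\ layer i \subset U.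
Proof.
move=> ilt; split; apply/subsetP => x; rewrite inE.
  by move=> xS; rewrite profile_self //; move: (cardsD1 x S); rewrite xS; lia.
by apply: contraTT => xU; rewrite profile_out // cards0.
Qed.

Lemma edge_crossings e : e \in E ->
  (\sum_(u in S) crosses e (isolating u) + \sum_(i < #|S| - 2) crosses e (layer i)
   <= \sum_(u in S) crosses e (W u))%N.
Proof.
move=> eE; have [x [y [xy ->]]] := edgeP eE.
under eq_bigr do rewrite crosses2 // !inE.
under [\sum_(i < _) _]eq_bigr do rewrite crosses2 // !inE.
under [X in (_ <= X)%N]eq_bigr => u uS do rewrite crosses2 // !mem_witness //.
exact: crossing_profile_le (profile_sub x) (profile_sub y).
Qed.

Lemma sum_cutval_isolating : \sum_(u in S) d (isolating u) <= d U *+ 2.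
Proof.
have crossings : \sum_(u in S) d (isolating u) + \sum_(i < #|S| - 2) d (layer i)
                 <= \sum_(u in S) d (W u).
  rewrite !sum_cutvalE -big_split /=.
  under eq_bigr do rewrite -mulrnDr.
  exact: ler_sum_edges edge_crossings.
have witnesses : \sum_(u in S) d (W u) <= d U *+ #|S|.
  by rewrite -sumr_const ler_sum // => u /W_witness [].
have layers : d U *+ (#|S| - 2) <= \sum_(i < #|S| - 2) d (layer i).
  rewrite -[X in _ *+ X]card_ord -sumr_const ler_sum // => i _.
  by have [SL LU] := layer_between (ltn_ord i); apply: unique_min_between_le minU SL LU.
have splitS : d U *+ #|S| = d U *+ 2 + d U *+ (#|S| - 2) by rewrite -mulrnDr subnKC.
lra.
Qed.

End MinimalityWitnesses.

Lemma minimality_witness S U u : u \in S -> unique_min_between S U ->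
  ~~ unique_min_between (S :\ u) U ->
  exists W, [/\ W \subset U, S :\ u \subset W, u \notin W & d W <= d U].
Proof.
move=> uS minS /forallPn [W]; rewrite negb_imply -leNgt => /andP [/andP [SuW WU] dW].
exists W; split => //; first exact: proper_sub WU.
apply: contraTN dW => uW; rewrite -ltNge; apply: (unique_min_between_lt minS).
- by rewrite -(setD1K uS) subUset sub1set uW SuW.
- exact: proper_sub WU.
- by move: WU; rewrite properEneq => /andP [].
Qed.

Lemma exists_small_unique_min_between U lam : is_cut U ->
  (forall X, is_cut X -> lam <= d X) ->
  exists S, [/\ S \subset U, unique_min_between S U & #|S|%:R * lam <= 2 * d U].
Proof.
move=> Ucut lamP; pose P := [pred S : {set V} | (S \subset U) && unique_min_between S U].
have PU : P U by rewrite /= subxx; apply/unique_min_betweenP => X UX; rewrite properE UX andbF.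
have [S /minsetP [/andP [SU minS] Smin]] := @ex_minset _ P (ex_intro _ U PU).
exists S; split => //; have dUlam := lamP U Ucut; have dU0 := cutval_ge0 U.
have [S1|S2] := leqP #|S| 1.
  have : #|S|%:R <= 1 :> R by rewrite (ler_nat R #|S| 1).
  have := ler0n R #|S|; nra.
have /fin_all_exists [W Wwit] : forall u, exists W, u \in S ->
    [/\ W \subset U, S :\ u \subset W, u \notin W & d W <= d U].
  move=> u; have [uS|_] := boolP (u \in S); last by exists set0.
  have notminSu : ~~ unique_min_between (S :\ u) U.
    apply/negP => minSu; have SuS : S :\ u \subset S := subsetDl S [set u].
    have PSu : P (S :\ u) by rewrite /= minSu andbT (subset_trans SuS SU).
    by move: uS; rewrite -(Smin _ PSu SuS) !inE eqxx.
  by have [W Wu] := minimality_witness uS minS notminSu; exists W.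
have lower : lam *+ #|S| <= \sum_(u in S) d (isolating S W u).
  rewrite -sumr_const ler_sum // => u uS; apply: lamP.
  exact: is_cut_subset (mem_isolating Wwit uS) (isolating_sub S2 Wwit u) Ucut.2.
by rewrite !mulr_natl (le_trans lower) // sum_cutval_isolating.
Qed.

Lemma cutval_lt_sandwich S T U X :
  unique_min_between S U -> unique_min_between T (~: U) ->
  S \subset U -> T \subset ~: U -> S \subset X -> T \subset ~: X -> X != U -> d U < d X.
Proof.
move=> minS minT SU TU SX TX neXU; have submod := cutval_submod X U.
have TXU : T \subset ~: (X :|: U) by rewrite setCU subsetI TX TU.
have XUU : ~: (X :|: U) \subset ~: U by rewrite setCS subsetUr.
have outer_le : d U <= d (X :|: U).
  by rewrite -(cutvalC U) -(cutvalC (X :|: U)) (unique_min_between_le minT).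
have outer_lt : X :|: U != U -> d U < d (X :|: U).
  move=> neXUU; rewrite -(cutvalC U) -(cutvalC (X :|: U)).
  by rewrite (unique_min_between_lt minT) ?(inj_eq (@setC_inj _)).
have [UX|nUX] := boolP (U \subset X).
  have neXUU : X :|: U != U.
    by apply: contra_neq neXU => /setUidPr XU; apply/eqP; rewrite eqEsubset XU UX.
  by have := outer_lt neXUU; rewrite (setIidPr UX) in submod; lra.
have neXIU : X :&: U != U by apply: contraNneq nUX => /setIidPr.
have SXU : S \subset X :&: U by rewrite subsetI SX SU.
by have := unique_min_between_lt minS SXU (subsetIr X U) neXIU; lra.
Qed.

End CutFunction.

Unset Implicit Arguments.

Theorem theorem1p1 (R : realType) (V : finType) (E : {set {set V}})
  (c : {set V} -> R) (alpha : R) (U : {set V}) :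
  is_graph E -> connected_graph E -> positive_costs E c ->
  1 <= alpha -> approx_min_cut E c alpha U ->
  exists S T : {set V},
    [/\ (#|S|%:R <= (Num.floor (2 * alpha))%:~R + 1 :> R),
        (#|T|%:R <= (Num.floor (2 * alpha))%:~R + 1 :> R) &
        unique_min_terminal_cut E c S T U].
Proof.
move=> graphE conn posc _ [Ucut [lam [[[U0 [U0cut dU0]] lamP] dU]]].
have lam_gt0 : 0 < lam by rewrite -dU0 (cutval_gt0 posc conn U0cut).
have card_le n : n%:R * lam <= 2 * cutval E c U ->
    n%:R <= (Num.floor (2 * alpha))%:~R + 1 :> R.
  move=> nlam; have : n%:R <= 2 * alpha by rewrite -(ler_pM2r lam_gt0); nra.
  by have := floorD1_gt (2 * alpha); rewrite intrD; lra.
have [S [SU minS cardS]] := exists_small_unique_min_between graphE posc Ucut lamP.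
have [T [TU minT cardT]] :=
  exists_small_unique_min_between graphE posc (is_cutC Ucut) lamP.
rewrite cutvalC // in cardT.
have UT : U \subset ~: T by rewrite subsetC.
exists S, T; split; [exact: card_le | exact: card_le | split].
  split; [exact: unique_min_between_neq0 Ucut.1 minS
         | exact: unique_min_between_neq0 (is_cutC Ucut).1 minT
         | by rewrite disjoints_subset (subset_trans SU UT)
         | exact: Ucut | by rewrite SU UT].
move=> X [_ _ _ _ /andP [SX XT]] neXU.
by apply: (cutval_lt_sandwich graphE posc minS minT) => //; rewrite subsetC.
Qed.
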